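(* For every $n>3$, let $G_n$ be the directed graph with nodes $0,\dots,n-1$ and arcs $i\to i+1$ for $0\le i\le n-2$, $j\to 0$ for $1\le j\le n-1$, and $0\to n-1$. Then $G_n$ is strongly connected and $R(G_n)=1/3$.
   Context: $d_G(x,y)$ is the shortest directed path length from $x$ to $y$ ($\infty$ if none). The distance-count matrix $C_G\in\mathbb{R}^{n\times n}$ has $(C_G)_{i,k}=|\{j: d_G(j,i)=k\}|$. For $\mathbf a\in\mathbb{R}^{\mathbb{N}}$ (with $a_0$ arbitrary) the linear centrality is $f^{\mathbf a}_G(i)=\sum_{k=0}^{n-1}(C_G)_{i,k}a_k$. A permutation $\pi$ of $\{0,\dots,n-1\}$ is representable by $G$ if there is $\mathbf a$ with $f^{\mathbf a}_G(\pi(0))>\dots>f^{\mathbf a}_G(\pi(n-1))$. $R(G)=|\{\pi\in S_n:\pi\text{ representable by }G\}|/n!$. *)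

From Stdlib Require Import Rdefinitions.
From HB Require Import structures.
From mathcomp Require Import all_boot all_order all_algebra all_fingroup.
From mathcomp Require Import boolp.
From mathcomp Require Import Rstruct.
Set Implicit Arguments. Unset Strict Implicit. Unset Printing Implicit Defensive.
Import Order.TTheory GRing.Theory Num.Theory.
Local Open Scope ring_scope.

Fixpoint walk (n : nat) (e : rel 'I_n) (k : nat) (x y : 'I_n) : bool :=
  if k is k'.+1 then [exists z, e x z && walk e k' z y] else x == y.

Definition dist_is (n : nat) (e : rel 'I_n) (x y : 'I_n) (k : nat) : bool :=
  walk e k x y && [forall m : 'I_k, ~~ walk e m x y].

Definition Cmat (n : nat) (e : rel 'I_n) (i : 'I_n) (k : nat) : nat :=
  #|[set j : 'I_n | dist_is e j i k]|.

Definition lin_centrality (n : nat) (e : rel 'I_n) (a : nat -> R) (i : 'I_n) : R :=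
  \sum_(k < n) (Cmat e i k)%:R * a k.

Definition representable (n : nat) (e : rel 'I_n) (pi : 'S_n) : Prop :=
  exists a : nat -> R,
    forall i j : 'I_n, val j = (val i).+1 ->
      lin_centrality e a (pi j) < lin_centrality e a (pi i).

Definition Rratio (n : nat) (e : rel 'I_n) : R :=
  (#|[set pi : 'S_n | `[< representable e pi >]]|)%:R / (n`!)%:R.

Definition strongly_connected (n : nat) (e : rel 'I_n) : Prop :=
  forall x y : 'I_n, connect e x y.

Definition Gn (n : nat) : rel 'I_n :=
  fun i j =>
    [|| val j == (val i).+1,
        (val j == 0%N) && (val i != 0%N)
      | (val i == 0%N) && (val j == n.-1)].
Arguments Gn n : clear implicits.

From Stdlib Require Import Rdefinitions.
From HB Require Import structures.
From mathcomp Require Import all_boot all_order all_algebra all_fingroup.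
From mathcomp Require Import boolp Rstruct.
From mathcomp Require Import zify ring lra.
Import Order.TTheory GRing.Theory Num.Theory.
Set Implicit Arguments. Unset Strict Implicit.
Local Open Scope ring_scope.

(* Distances in G_n have a closed form: for y < n-1, d(x,y) = y - x if x <= y and
   y + 1 otherwise (through 0), while every node other than 0 and n-2 reaches n-1 in
   two steps through 0.  Hence f(y) = a_0 + ... + a_y + (n-1-y) a_(y+1) for y < n-1,
   a triangular system in which f(0), ..., f(n-2) can be prescribed arbitrarily, and
   f(n-1) = a_0 + 2 a_1 + (n-3) a_2, so that (n-2) f(n-1) = f(0) + (n-3) f(1).  Thus
   f(n-1) is a strict weighted mean of f(0) and f(1): a ranking is representable iff
   it puts n-1 between 0 and 1, and by symmetry under transpositions exactly a third
   of all rankings do so. *)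

Lemma walk_connect n (e : rel 'I_n) k x y : walk e k x y -> connect e x y.
Proof.
elim: k x => [|k IHk] x /=; first by move=> /eqP ->.
by case/existsP=> z /andP[exz /IHk]; apply: connect_trans (connect1 exz).
Qed.

Section DistanceFunction.

Variables (n : nat) (e : rel 'I_n) (D : 'I_n -> 'I_n -> nat).
Hypothesis D_eq0 : forall x y, (D x y == 0)%N = (x == y).
Hypothesis D_arc : forall y {x z}, e x z -> (D x y <= (D z y).+1)%N.
Hypothesis D_step : forall x y, x != y -> exists2 z, e x z & (D z y).+1 = D x y.

Lemma dist_le_walk k x y : walk e k x y -> (D x y <= k)%N.
Proof.
elim: k x => [|k IHk] x /=; first by move=> /eqP->; rewrite leqn0 D_eq0.
case/existsP=> z /andP[exz /IHk le_Dk].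
by apply: leq_trans (D_arc y exz) _; rewrite ltnS.
Qed.

Lemma walk_dist x y : walk e (D x y) x y.
Proof.
move Dxy: (D x y) => k; elim: k x Dxy => [|k IHk] x /= Dxy.
  by rewrite -D_eq0 Dxy.
have /D_step[z exz Dzy] : x != y by rewrite -D_eq0 Dxy.
by apply/existsP; exists z; rewrite exz IHk //; apply: succn_inj; rewrite Dzy.
Qed.

Lemma dist_isE x y k : dist_is e x y k = (k == D x y).
Proof.
apply/andP/eqP => [[/dist_le_walk le_Dk /forallP shortest] | ->].
  apply/anti_leq; rewrite le_Dk andbT leqNgt; apply/negP => lt_Dk.
  by have := shortest (Ordinal lt_Dk); rewrite walk_dist.
split; first exact: walk_dist.
by apply/forallP => l; apply/negP => /dist_le_walk; rewrite leqNgt ltn_ord.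
Qed.

Lemma strongly_connected_dist : strongly_connected e.
Proof. by move=> x y; apply: walk_connect (walk_dist x y). Qed.

Hypothesis D_lt : forall x y, (D x y < n)%N.

Lemma lin_centrality_dist (a : nat -> R) y :
  lin_centrality e a y = \sum_x a (D x y).
Proof.
rewrite /lin_centrality /Cmat.
under eq_bigr => k _ do rewrite mulr_natl -sumr_const big_mkcond /=.
rewrite exchange_big /=; apply: eq_bigr => x _.
rewrite -big_mkcond /= (big_pred1 (Ordinal (D_lt x y))) // => k.
by rewrite inE dist_isE.
Qed.

End DistanceFunction.

Lemma exists_partial_sums (F : fieldType) (c g : nat -> F) :
  exists a : nat -> F, forall i, c i != 0 -> \sum_(k < i.+1) a k + c i * a i.+1 = g i.
Proof.
pose fix S i := if i is i'.+1 then S i' + (g i' - S i') / c i' else 0.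
pose a k := if k is k'.+1 then S k - S k' else 0.
exists a => i nz_ci; have -> : \sum_(k < i.+1) a k = S i.
  elim: i {nz_ci} => [|i IHi]; first by rewrite big_ord1.
  by rewrite big_ord_recr IHi /= addrC subrK.
by rewrite /=; field.
Qed.

Lemma exists_decreasing_mean (F : realFieldType) (alpha beta x y z : F) :
  0 < alpha -> 0 < beta -> x < y < z ->
  exists2 h : F -> F, {homo h : u v / u < v >-> v < u}
    & alpha * h x + beta * h z = (alpha + beta) * h y.
Proof.
move=> alpha_gt0 beta_gt0 /andP[lt_xy lt_yz].
have sl_gt0 : 0 < beta * (z - y) by rewrite mulr_gt0 // subr_gt0.
have sr_gt0 : 0 < alpha * (y - x) by rewrite mulr_gt0 // subr_gt0.
exists (fun u => (y - u) * (if u <= y then beta * (z - y) else alpha * (y - x))).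
  by move=> u v lt_uv /=; case: (leP u y); case: (leP v y); nra.
by rewrite lexx (ltW lt_xy) leNgt lt_yz /=; ring.
Qed.

Definition between (i j k : nat) : bool := ((i < j < k) || (k < j < i))%N.

Lemma between_trichotomy (i j k : nat) : i != j -> j != k -> i != k ->
  (between i j k + between j i k + between i k j)%N = 1%N.
Proof.
rewrite /between => ne_ij ne_jk ne_ik.
by case: (ltngtP i j) ne_ij; case: (ltngtP j k) ne_jk; case: (ltngtP i k) ne_ik;
  rewrite //= => *; lia.
Qed.

Lemma representable_pos n (e : rel 'I_n) (pi : 'S_n) :
  representable e pi <->
  exists a, forall u v, ((pi^-1)%g u < (pi^-1)%g v)%N ->
    lin_centrality e a v < lin_centrality e a u.
Proof.
split=> -[a dec_a]; exists a; last first.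
  by move=> i j ji; apply: dec_a; rewrite !permK ji.
move=> u v lt_uv.
pose F k := lin_centrality e a (pi (insubd u k)).
have: {in [pred k | (k < n)%N] &, {homo F : k l / (k < l)%N >-> l < k}}.
  apply: (homo_ltn_in (r := fun s t => t < s)) => [s t r lt_ts lt_rs | | k lt_k lt_k1].
  - exact: lt_trans lt_rs lt_ts.
  - by move=> k l _ lt_l j /andP[_ lt_jl]; apply: ltn_trans lt_jl lt_l.
  - by rewrite !inE in lt_k lt_k1; apply: dec_a; rewrite !val_insubd lt_k lt_k1.
by move=> /(_ _ _ (ltn_ord _) (ltn_ord _) lt_uv); rewrite /F !valKd !permKV.
Qed.

Definition middle_perms n (x y z : 'I_n) : {set 'S_n} :=
  [set s : 'S_n | between ((s^-1)%g x) ((s^-1)%g y) ((s^-1)%g z)].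

Lemma card_middle_perms_perm n (t : 'S_n) x y z :
  #|middle_perms (t x) (t y) (t z)| = #|middle_perms x y z|.
Proof.
rewrite -(card_preimset (middle_perms x y z) (mulIg (t^-1)%g)); apply: eq_card => s.
by rewrite !inE invgM invgK !permM.
Qed.

Lemma card_middle_perms n (x y z : 'I_n) : x != y -> y != z -> x != z ->
  (3 * #|middle_perms x y z|)%N = n`!.
Proof.
move=> ne_xy ne_yz ne_xz.
have card_yxz : #|middle_perms y x z| = #|middle_perms x y z|.
  by rewrite -(card_middle_perms_perm (tperm x y) x) tpermL tpermR tpermD.
have card_xzy : #|middle_perms x z y| = #|middle_perms x y z|.
  by rewrite -(card_middle_perms_perm (tperm y z) x) tpermL tpermR tpermD // eq_sym.
have card_sum (A : {set 'S_n}) : #|A| = (\sum_s (s \in A))%N.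
  by rewrite -sum1_card big_mkcond.
have split3 (s : 'S_n) : ((s \in middle_perms x y z) + (s \in middle_perms y x z)
                           + (s \in middle_perms x z y))%N = 1%N.
  by rewrite !inE; apply: between_trichotomy; rewrite (inj_eq val_inj) (inj_eq perm_inj).
rewrite -card_Sn -cardsT (card_sum [set: _]).
under eq_bigr => s _ do rewrite in_setT /= -(split3 s).
by rewrite !big_split /= -!card_sum card_yxz card_xzy mulSn mul2n -addnn addnA.
Qed.

Section DistancesInGn.

Local Open Scope nat_scope.

Variable m : nat.
Local Notation n := m.+4.

Definition Gn_dist (x y : nat) : nat :=
  if y == m.+3 then
    if x == m.+3 then 0 else if (x == m.+2) || (x == 0) then 1 else 2
  else if x <= y then y - x else y.+1.

Lemma Gn_dist_eq0 (x y : 'I_n) : (Gn_dist x y == 0) = (x == y).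
Proof.
rewrite -val_eqE /Gn_dist /=; have := ltn_ord x; have := ltn_ord y.
by repeat case: ifP; move=> *; apply/eqP/eqP; lia.
Qed.

Lemma Gn_dist_arc (y x z : 'I_n) : Gn n x z -> Gn_dist x y <= (Gn_dist z y).+1.
Proof.
rewrite /Gn /Gn_dist /=; have := ltn_ord x; have := ltn_ord y; have := ltn_ord z.
by repeat case: ifP; lia.
Qed.

Lemma Gn_dist_step (x y : 'I_n) :
  x != y -> exists2 z, Gn n x z & (Gn_dist z y).+1 = Gn_dist x y.
Proof.
rewrite -val_eqE /= => ne_xy; have := ltn_ord x; have := ltn_ord y => lt_y lt_x.
pose z := if x < y < m.+3 then x.+1
          else if (y == m.+3 :> nat) && ((x == m.+2 :> nat) || (x == 0 :> nat)) then m.+3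
          else 0.
have lt_z : z < n by rewrite /z; repeat case: ifP; lia.
exists (Ordinal lt_z); rewrite /Gn /Gn_dist /= /z; repeat case: ifP => //=; lia.
Qed.

Lemma Gn_dist_lt (x y : 'I_n) : Gn_dist x y < n.
Proof.
rewrite /Gn_dist; have := ltn_ord x; have := ltn_ord y.
by repeat case: ifP; lia.
Qed.

Lemma Gn_strongly_connected : strongly_connected (Gn n).
Proof. exact: strongly_connected_dist Gn_dist_eq0 Gn_dist_step. Qed.

Lemma lin_centrality_Gn a y :
  lin_centrality (Gn n) a y = (\sum_(x : 'I_n) a (Gn_dist x y))%R.
Proof.
exact: lin_centrality_dist Gn_dist_eq0 Gn_dist_arc Gn_dist_step Gn_dist_lt a y.
Qed.

End DistancesInGn.

Section CentralityInGn.

Variable m : nat.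
Local Notation n := m.+4.
Local Notation f a := (lin_centrality (Gn n) a).

Definition ord1 : 'I_n := Ordinal (isT : (1 < n)%N).

Lemma lin_centrality_Gn_lt a (y : 'I_n) : y != m.+3 :> nat ->
  f a y = \sum_(k < y.+1) a k + (m.+3 - y)%:R * a y.+1.
Proof.
move=> y_nlast; have lt_y := ltn_ord y.
rewrite lin_centrality_Gn -(big_mkord xpredT (fun x => a (Gn_dist m x y))).
rewrite (big_cat_nat _ (n := y.+1)) //=; congr (_ + _).
  rewrite big_nat_rev -(big_mkord xpredT a); apply: eq_big_nat => x /= lt_x.
  by rewrite /Gn_dist (negbTE y_nlast) /= ifT; [congr a|]; lia.
rewrite (eq_big_nat _ _ (F2 := fun=> a y.+1)) => [|x /andP[lt_yx _]]; last first.
  by rewrite /Gn_dist (negbTE y_nlast) /= ifF //; lia.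
by rewrite sumr_const_nat mulr_natl.
Qed.

Lemma lin_centrality_Gn_last a : f a ord_max = a 0%N + a 1%N *+ 2 + a 2%N *+ m.+1.
Proof.
rewrite lin_centrality_Gn -(big_mkord xpredT (fun x => a (Gn_dist m x m.+3))).
rewrite big_nat_recr // big_nat_recr //.
rewrite big_ltn //= (eq_big_nat _ _ (F2 := fun=> a 2%N)) => [|x lt_x]; last first.
  by rewrite /Gn_dist eqxx !ifF //; lia.
rewrite sumr_const_nat /Gn_dist !eqxx /= ifF; last by lia.
by rewrite subn1 /= mulr2n; ring.
Qed.

Lemma lin_centrality_Gn_mean a :
  m.+2%:R * f a ord_max = f a ord0 + m.+1%:R * f a ord1.
Proof.
rewrite lin_centrality_Gn_last !lin_centrality_Gn_lt //=.
rewrite !big_ord_recr !big_ord0 /= subn0 subn1 /=.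
ring.
Qed.

Lemma lin_centrality_Gn_surj (g : 'I_n -> R) :
  exists a, forall y : 'I_n, y != m.+3 :> nat -> f a y = g y.
Proof.
have [a Ha] := exists_partial_sums (fun i => (m.+3 - i)%:R) (fun i => g (inord i)).
exists a => y y_nlast; have lt_y := ltn_ord y.
by rewrite lin_centrality_Gn_lt // Ha ?inord_val // pnatr_eq0; lia.
Qed.

End CentralityInGn.

Section RepresentableInGn.

Variables (m : nat) (pi : 'S_m.+4).
Local Notation n := m.+4.
Local Notation pos v := (nat_of_ord ((pi^-1)%g v)).
Local Notation rpos v := ((pos v)%:R : R).

Lemma Gn_representable_between :
  representable (Gn n) pi -> between (pos ord0) (pos ord_max) (pos (ord1 m)).
Proof.
case/representable_pos=> a dec_a; apply: contraT => not_between.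
have mean := lin_centrality_Gn_mean m a.
have c_gt0 : 0 < m.+1%:R :> R by rewrite ltr0n.
have [ne01 ne0l ne1l] :
    [/\ pos ord0 != pos (ord1 m), pos ord0 != pos ord_max & pos (ord1 m) != pos ord_max].
  by rewrite !(inj_eq val_inj) !(inj_eq perm_inj).
have [[lt0 lt1] | [gt0 gt1]] :
    (pos ord_max < pos ord0 /\ pos ord_max < pos (ord1 m))%N \/
    (pos ord0 < pos ord_max /\ pos (ord1 m) < pos ord_max)%N.
  by move: not_between ne01 ne0l ne1l; rewrite /between; lia.
- by have := dec_a _ _ lt0; have := dec_a _ _ lt1; nra.
- by have := dec_a _ _ gt0; have := dec_a _ _ gt1; nra.
Qed.

Lemma between_Gn_representable :
  between (pos ord0) (pos ord_max) (pos (ord1 m)) -> representable (Gn n) pi.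
Proof.
move=> mid.
have [h h_dec h_mean] : exists2 h : R -> R, {homo h : u v / u < v >-> v < u} &
    h (rpos ord0) + m.+1%:R * h (rpos (ord1 m)) = m.+2%:R * h (rpos ord_max).
  case/orP: mid => /andP[lt_l lt_r].
  - have lt_pos : rpos ord0 < rpos ord_max < rpos (ord1 m).
      by rewrite !ltr_nat lt_l lt_r.
    have [h h_dec h_mean] := exists_decreasing_mean ltr01 (ltr0Sn R m) lt_pos.
    by exists h; rewrite // -h_mean mul1r.
  - have lt_pos : rpos (ord1 m) < rpos ord_max < rpos ord0.
      by rewrite !ltr_nat lt_l lt_r.
    have [h h_dec h_mean] := exists_decreasing_mean (ltr0Sn R m) ltr01 lt_pos.
    by rewrite mul1r addrC natr1 in h_mean; exists h.
have [a fa] := lin_centrality_Gn_surj (fun v => h (rpos v)).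
have fa_all v : lin_centrality (Gn n) a v = h (rpos v).
  have [v_last | ] := eqVneq (v : nat) m.+3; last exact: fa.
  have -> : v = ord_max by exact: val_inj.
  have nz : m.+2%:R != 0 :> R by rewrite pnatr_eq0.
  by apply: (mulfI nz); rewrite lin_centrality_Gn_mean !fa // h_mean.
apply/representable_pos; exists a => u v lt_uv.
by rewrite !fa_all; apply: h_dec; rewrite ltr_nat.
Qed.

End RepresentableInGn.

Theorem corollary5 (n : nat) (hn : (3 < n)%N) :
  strongly_connected (Gn n) /\ Rratio (Gn n) = 3%:R^-1.
Proof.
case: n hn => [|[|[|[|m]]]] // _; split; first exact: Gn_strongly_connected.
rewrite /Rratio.
have -> : [set pi : 'S_m.+4 | `[< representable (Gn m.+4) pi >]] =
          middle_perms ord0 ord_max (ord1 m).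
  apply/setP => pi; rewrite !inE; apply/asboolP/idP.
    exact: Gn_representable_between.
  exact: between_Gn_representable.
rewrite -(@card_middle_perms _ ord0 ord_max (ord1 m)) //.
have thirds (k : nat) : (0 < k)%N -> k%:R / (3 * k)%:R = 3%:R^-1 :> R.
  by move=> k_gt0; rewrite natrM; field; rewrite pnatr_eq0 -lt0n k_gt0.
apply: thirds; rewrite -(ltn_pmul2l (isT : (0 < 3)%N)) muln0 card_middle_perms //.
exact: fact_gt0.
Qed.
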